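(* Let $U$ and $V$ be distinct Euclidean discs in $\mathbb{C}$ with centres $u,v$ and radii $r,s$ respectively, with $V\subset U$. Suppose that for some point $z\in\Pi(U)$, $$\frac{r}{s}<\min\left\{2,\ 1+\tfrac18\sinh\rho(z,\Pi(V))\right\}.$$ Then $h(z)<s/2$. Moreover, if $w$ is the point of $\Pi(V)$ with $h(w)=h(z)$ that is closest in Euclidean distance to $z$, then $|z-w|<3(r-s)$.
   Context: $\mathbb{H}^3=\{(x,y,t)\in\mathbb{R}^3:t>0\}$ with the hyperbolic metric $\rho$ given by the density $ds/t$, and $\mathbb{C}$ is identified with the plane $t=0$. For $z=(x,y,t)\in\mathbb{H}^3$, $h(z)=t$. For a Euclidean disc $D\subset\mathbb{C}$ with centre $c$ and radius $r$, $\Pi(D)=\{z\in\mathbb{H}^3:|z-c|=r\}$ is the hyperbolic plane (hemisphere) over $D$; $\rho(z,\Pi(V))$ is the hyperbolic distance from $z$ to this plane. $|\cdot|$ is the Euclidean norm in $\mathbb{R}^3$. *)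

From Stdlib Require Import Reals.
Open Scope R_scope.

(* Points of C = R^2 and of the closed upper half space R^3 (t >= 0 allowed
   only for C embedded as t = 0; H^3 points additionally satisfy t > 0). *)
Definition pt3 : Type := (R * R * R)%type.
Definition cx (p : R * R) : R := fst p.
Definition cy (p : R * R) : R := snd p.
Definition px (z : pt3) : R := fst (fst z).
Definition py (z : pt3) : R := snd (fst z).
Definition h (z : pt3) : R := snd z.

Definition inH3 (z : pt3) : Prop := 0 < h z.

Definition edist (p q : pt3) : R :=
  sqrt ((px p - px q)^2 + (py p - py q)^2 + (h p - h q)^2).

Definition cdist (a b : R * R) : R :=
  sqrt ((cx a - cx b)^2 + (cy a - cy b)^2).

Definition embC (c : R * R) : pt3 := (cx c, cy c, 0).

Definition edisc (c : R * R) (r : R) : (R * R) -> Prop :=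
  fun w => cdist w c <= r.

Definition Pi (c : R * R) (r : R) (z : pt3) : Prop :=
  inH3 z /\ edist z (embC c) = r.

Definition arcosh (x : R) : R := ln (x + sqrt (x^2 - 1)).

(* hyperbolic distance for the metric ds/t on the upper half space:
   cosh rho(p,q) = 1 + |p-q|^2 / (2 h(p) h(q)) *)
Definition rho (p q : pt3) : R :=
  arcosh (1 + (edist p q)^2 / (2 * h p * h q)).

Definition is_inf (E : R -> Prop) (m : R) : Prop :=
  (forall x, E x -> m <= x) /\ (forall b, (forall x, E x -> b <= x) -> b <= m).

Definition rho_plane (z : pt3) (c : R * R) (r : R) (d : R) : Prop :=
  is_inf (fun x => exists w, Pi c r w /\ x = rho z w) d.

(* Write x for the shadow of z on C and t = h(z).  The hyperbolic distance from z
   to the hemisphere Pi(c, s) is attained at an explicit foot point and satisfies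
   sinh rho = (|z - c|^2 - s^2) / (2 t s).  Since V is inside U, |u - v| + s <= r,
   so s <= |z - v| <= 2r - s and sinh rho(z, Pi(V)) <= 2 r (r - s) / (t s); together
   with r - s < s sinh rho(z, Pi(V)) / 8 this forces r > s and t < r / 4 < s / 2.
   The point of Pi(V) at height t on the vertical half-plane through v and z is at
   distance |x - v| - sqrt(s^2 - t^2) <= sqrt(r^2 - t^2) - sqrt(s^2 - t^2) + (r - s)
   from z, and for t < s / 2 the difference of square roots is below 2 (r - s). *)

From Stdlib Require Import Reals Lra Psatz.
Open Scope R_scope.

Ltac sum_sq_nonneg := repeat apply Rplus_le_le_0_compat; apply pow2_ge_0.

Definition shadow (z : pt3) : R * R := (px z, py z).

Lemma sqrt_sum3_sq_triangle (a1 a2 a3 b1 b2 b3 : R) :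
  sqrt ((a1 + b1) ^ 2 + (a2 + b2) ^ 2 + (a3 + b3) ^ 2)
  <= sqrt (a1 ^ 2 + a2 ^ 2 + a3 ^ 2) + sqrt (b1 ^ 2 + b2 ^ 2 + b3 ^ 2).
Proof.
  set (A := a1 ^ 2 + a2 ^ 2 + a3 ^ 2); set (B := b1 ^ 2 + b2 ^ 2 + b3 ^ 2).
  assert (HA : sqrt A ^ 2 = A) by (apply pow2_sqrt; unfold A; sum_sq_nonneg).
  assert (HB : sqrt B ^ 2 = B) by (apply pow2_sqrt; unfold B; sum_sq_nonneg).
  pose proof (sqrt_pos A); pose proof (sqrt_pos B).
  assert (Hlagrange : (a1 * b1 + a2 * b2 + a3 * b3) ^ 2 <= A * B).
  { assert (A * B - (a1 * b1 + a2 * b2 + a3 * b3) ^ 2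
            = (a1 * b2 - a2 * b1) ^ 2 + (a1 * b3 - a3 * b1) ^ 2 + (a2 * b3 - a3 * b2) ^ 2)
      by (unfold A, B; ring).
    pose proof (pow2_ge_0 (a1 * b2 - a2 * b1)); pose proof (pow2_ge_0 (a1 * b3 - a3 * b1));
      pose proof (pow2_ge_0 (a2 * b3 - a3 * b2)); lra. }
  assert (Hcs : a1 * b1 + a2 * b2 + a3 * b3 <= sqrt A * sqrt B).
  { rewrite <- HA, <- HB in Hlagrange.
    assert (0 <= sqrt A * sqrt B) by nra. nra. }
  rewrite <- (sqrt_pow2 (sqrt A + sqrt B)) by lra.
  apply sqrt_le_1_alt; unfold A, B in *; nra.
Qed.

Lemma edist_sym (p q : pt3) : edist p q = edist q p.
Proof. unfold edist; f_equal; ring. Qed.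

Lemma edist_triangle (p q m : pt3) : edist p q <= edist p m + edist m q.
Proof.
  unfold edist.
  replace (px p - px q) with ((px p - px m) + (px m - px q)) by ring.
  replace (py p - py q) with ((py p - py m) + (py m - py q)) by ring.
  replace (h p - h q) with ((h p - h m) + (h m - h q)) by ring.
  apply sqrt_sum3_sq_triangle.
Qed.

Lemma edist_embC (a b : R * R) : edist (embC a) (embC b) = cdist a b.
Proof. unfold edist, cdist, embC, px, py, h; simpl; f_equal; ring. Qed.

Lemma cdist_triangle (a b c : R * R) : cdist a b <= cdist a c + cdist c b.
Proof. rewrite <- !edist_embC; apply edist_triangle. Qed.

Lemma edist_embC_sq (z : pt3) (c : R * R) :
  edist z (embC c) ^ 2 = cdist (shadow z) c ^ 2 + h z ^ 2.
Proof.
  unfold edist, cdist, embC, shadow, px, py, h, cx, cy; cbn [fst snd].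
  rewrite !pow2_sqrt by sum_sq_nonneg; ring.
Qed.

Lemma cdist_polar (a b : R * R) :
  exists e1 e2, e1 ^ 2 + e2 ^ 2 = 1 /\
    cx a - cx b = cdist a b * e1 /\ cy a - cy b = cdist a b * e2.
Proof.
  set (p := cdist a b).
  assert (Hp2 : p ^ 2 = (cx a - cx b) ^ 2 + (cy a - cy b) ^ 2)
    by (apply pow2_sqrt; sum_sq_nonneg).
  destruct (Req_dec p 0) as [Hp0 | Hp0].
  - pose proof (pow2_ge_0 (cx a - cx b)); pose proof (pow2_ge_0 (cy a - cy b)).
    assert (Hx : cx a - cx b = 0) by nra.
    assert (Hy : cy a - cy b = 0) by nra.
    exists 1, 0; rewrite Hx, Hy, Hp0; repeat split; ring.
  - exists ((cx a - cx b) / p), ((cy a - cy b) / p); repeat split; [| field..]; auto.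
    field_simplify_eq; [lra | auto].
Qed.

Lemma scaled_unit_sq (k e1 e2 : R) :
  e1 ^ 2 + e2 ^ 2 = 1 -> (k * e1) ^ 2 + (k * e2) ^ 2 = k ^ 2.
Proof. intros He; rewrite <- (Rmult_1_r (k ^ 2)), <- He; ring. Qed.

Lemma edist_polar (p q : pt3) (k e1 e2 : R) :
  e1 ^ 2 + e2 ^ 2 = 1 -> px p - px q = k * e1 -> py p - py q = k * e2 ->
  edist p q = sqrt (k ^ 2 + (h p - h q) ^ 2).
Proof. intros He Hx Hy; unfold edist; rewrite Hx, Hy, scaled_unit_sq; auto. Qed.

Lemma cdist_sym (a b : R * R) : cdist a b = cdist b a.
Proof. rewrite <- !edist_embC; apply edist_sym. Qed.

Lemma edisc_incl_cdist (u v : R * R) (r s : R) :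
  0 < s -> (forall w, edisc v s w -> edisc u r w) -> cdist u v + s <= r.
Proof.
  intros Hs Hincl; rewrite cdist_sym.
  destruct (cdist_polar v u) as (e1 & e2 & He & H1 & H2).
  set (a := cdist v u) in *.
  assert (Ha : 0 <= a) by apply sqrt_pos.
  set (w := (cx v + s * e1, cy v + s * e2)).
  assert (Hwv : cdist w v = s).
  { unfold cdist.
    replace (cx w - cx v) with (s * e1) by (unfold w, cx; cbn [fst]; ring).
    replace (cy w - cy v) with (s * e2) by (unfold w, cy; cbn [snd]; ring).
    rewrite scaled_unit_sq, sqrt_pow2; lra. }
  assert (Hwu : cdist w u = a + s).
  { unfold cdist.
    replace (cx w - cx u) with ((a + s) * e1) by (unfold w, cx in *; cbn [fst]; lra).
    replace (cy w - cy u) with ((a + s) * e2) by (unfold w, cy in *; cbn [snd]; lra).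
    rewrite scaled_unit_sq, sqrt_pow2; lra. }
  assert (Hw : edisc u r w) by (apply Hincl; unfold edisc; lra).
  unfold edisc in Hw; lra.
Qed.

Lemma edist_center_bounds (u v : R * R) (r s : R) (z : pt3) :
  Pi u r z -> cdist u v + s <= r -> s <= edist z (embC v) <= 2 * r - s.
Proof.
  intros [_ Hzu] Huv.
  pose proof (edist_triangle z (embC v) (embC u)) as Hv.
  pose proof (edist_triangle z (embC u) (embC v)) as Hu.
  rewrite edist_embC in Hv, Hu; rewrite cdist_sym in Hu.
  lra.
Qed.

Lemma sinh_arcosh (x : R) : 1 <= x -> sinh (arcosh x) = sqrt (x ^ 2 - 1).
Proof.
  intros Hx; unfold sinh, arcosh.
  set (y := sqrt (x ^ 2 - 1)).
  assert (Hy2 : y ^ 2 = x ^ 2 - 1) by (apply pow2_sqrt; nra).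
  assert (Hy : 0 <= y) by apply sqrt_pos.
  rewrite exp_Ropp, exp_ln by lra.
  replace (/ (x + y)) with (x - y); [field |].
  field_simplify_eq; [nra | lra].
Qed.

(* In the vertical half-plane through c and z, with z at horizontal distance p
   from c and at height t, the foot of the perpendicular from z to the hemisphere
   of radius s lies at horizontal distance 2 s^2 p / M and height s Q / M, and the
   hyperbolic cosine of its distance to z is Q / (2 t s). *)
Section FootPoint.

Variables p t s Q : R.
Hypotheses (Ht : 0 < t) (Hs : 0 < s).
Hypothesis HQ2 : Q ^ 2 = (p ^ 2 + t ^ 2 - s ^ 2) ^ 2 + 4 * s ^ 2 * t ^ 2.
Hypothesis HQ : 0 < Q.

Let M := p ^ 2 + t ^ 2 + s ^ 2.

Lemma foot_radius : (2 * s ^ 2 * p / M) ^ 2 + (s * Q / M) ^ 2 = s ^ 2.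
Proof.
  assert (0 < M) by (unfold M; nra).
  field_simplify_eq; [| lra].
  rewrite HQ2; unfold M; ring.
Qed.

Lemma foot_cosh :
  1 + ((p - 2 * s ^ 2 * p / M) ^ 2 + (t - s * Q / M) ^ 2) / (2 * t * (s * Q / M))
  = Q / (2 * t * s).
Proof.
  assert (0 < M) by (unfold M; nra).
  field_simplify_eq; [| repeat split; lra].
  replace (Q ^ 3) with (Q * Q ^ 2) by ring.
  rewrite HQ2; unfold M; ring.
Qed.

Lemma foot_sinh :
  s ^ 2 <= p ^ 2 + t ^ 2 ->
  sinh (arcosh (Q / (2 * t * s))) = (p ^ 2 + t ^ 2 - s ^ 2) / (2 * t * s).
Proof.
  intros Hst.
  assert (Hts : 0 < 2 * t * s) by nra.
  rewrite sinh_arcosh.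
  - rewrite <- (sqrt_pow2 ((p ^ 2 + t ^ 2 - s ^ 2) / (2 * t * s)))
      by (apply Rmult_le_pos; [lra | apply Rlt_le, Rinv_0_lt_compat, Hts]).
    f_equal; field_simplify_eq; [| lra].
    rewrite HQ2; ring.
  - apply Rmult_le_reg_r with (2 * t * s); [exact Hts |].
    field_simplify; [| lra].
    pose proof (pow2_ge_0 (p ^ 2 + t ^ 2 - s ^ 2)); nra.
Qed.

End FootPoint.

Lemma foot_on_hemisphere (z : pt3) (c : R * R) (s : R) :
  0 < s -> inH3 z -> s <= edist z (embC c) ->
  exists w, Pi c s w /\
    sinh (rho z w) = (edist z (embC c) ^ 2 - s ^ 2) / (2 * h z * s).
Proof.
  intros Hs Ht HsD.
  destruct (cdist_polar (shadow z) c) as (e1 & e2 & He & H1 & H2).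
  change (cx (shadow z)) with (px z) in H1; change (cy (shadow z)) with (py z) in H2.
  pose proof (edist_embC_sq z c) as HD.
  unfold inH3 in Ht; set (p := cdist (shadow z) c) in *; set (t := h z) in *.
  set (D := edist z (embC c)) in *.
  assert (HsD2 : s ^ 2 <= D ^ 2) by nra.
  set (Q := sqrt ((p ^ 2 + t ^ 2 - s ^ 2) ^ 2 + 4 * s ^ 2 * t ^ 2)).
  assert (HQ2 : Q ^ 2 = (p ^ 2 + t ^ 2 - s ^ 2) ^ 2 + 4 * s ^ 2 * t ^ 2)
    by (apply pow2_sqrt; nra).
  assert (HQ : 0 < Q).
  { apply sqrt_lt_R0.
    pose proof (pow2_ge_0 (p ^ 2 + t ^ 2 - s ^ 2)); pose proof (pow_lt s 2 Hs).
    pose proof (pow_lt t 2 Ht); nra. }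
  set (M := p ^ 2 + t ^ 2 + s ^ 2).
  assert (HM : 0 < M) by (unfold M; nra).
  set (k := 2 * s ^ 2 * p / M).
  set (w := (cx c + k * e1, cy c + k * e2, s * Q / M) : pt3).
  assert (Hpxw : px w = cx c + k * e1) by reflexivity.
  assert (Hpyw : py w = cy c + k * e2) by reflexivity.
  assert (Hhw : h w = s * Q / M) by reflexivity.
  exists w; split; [split |].
  - unfold inH3; rewrite Hhw; apply Rdiv_lt_0_compat; nra.
  - rewrite (edist_polar w (embC c) k e1 e2) by (auto; rewrite ?Hpxw, ?Hpyw; cbn; ring).
    replace (h (embC c)) with 0 by reflexivity; rewrite Hhw, Rminus_0_r.
    unfold k, M; rewrite foot_radius by auto; apply sqrt_pow2; lra.
  - unfold rho.
    rewrite (edist_polar z w (p - k) e1 e2) by (auto; rewrite ?Hpxw, ?Hpyw; lra).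
    rewrite pow2_sqrt by sum_sq_nonneg.
    fold t; rewrite Hhw.
    unfold k, M; rewrite foot_cosh, HD by auto.
    apply foot_sinh; auto; lra.
Qed.

Lemma sinh_le (x y : R) : x <= y -> sinh x <= sinh y.
Proof. intros [Hlt | ->]; [now left; apply sinh_lt | lra]. Qed.

Lemma sinh_rho_plane_le (z : pt3) (c : R * R) (s d : R) :
  0 < s -> inH3 z -> s <= edist z (embC c) -> rho_plane z c s d ->
  sinh d <= (edist z (embC c) ^ 2 - s ^ 2) / (2 * h z * s).
Proof.
  intros Hs Hz HsD [Hlower _].
  destruct (foot_on_hemisphere z c s Hs Hz HsD) as (w & Hw & Hsinh).
  rewrite <- Hsinh; apply sinh_le, Hlower; now exists w.
Qed.

Lemma height_lt_half_radius (r s t D k : R) :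
  0 < s -> 0 < t -> s <= D <= 2 * r - s ->
  k <= (D ^ 2 - s ^ 2) / (2 * t * s) ->
  r / s < Rmin 2 (1 + k / 8) ->
  s < r /\ t < s / 2.
Proof.
  intros Hs Ht [HsD HDr] Hk Hrs.
  pose proof (Rlt_le_trans _ _ _ Hrs (Rmin_l _ _)) as Hr2.
  pose proof (Rlt_le_trans _ _ _ Hrs (Rmin_r _ _)) as Hrk.
  apply (Rmult_lt_compat_r s) in Hr2, Hrk; auto.
  replace (r / s * s) with r in Hr2, Hrk by (field; lra).
  assert (Hsk : s * k * (2 * t) <= D ^ 2 - s ^ 2).
  { apply (Rmult_le_compat_l (2 * t * s)) in Hk; [| nra].
    replace (2 * t * s * ((D ^ 2 - s ^ 2) / (2 * t * s))) with (D ^ 2 - s ^ 2) in Hk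
      by (field; lra).
    nra. }
  (* D^2 - s^2 <= (2 r - s)^2 - s^2 = 4 r (r - s) *)
  assert (Hgap : 4 * t * (r - s) < r * (r - s)) by nra.
  split; nra.
Qed.

Lemma radial_point_on_hemisphere (z : pt3) (c : R * R) (s : R) :
  inH3 z -> h z < s -> s <= edist z (embC c) ->
  exists w, Pi c s w /\ h w = h z /\
    edist z w = cdist (shadow z) c - sqrt (s ^ 2 - h z ^ 2).
Proof.
  intros Ht Hts HsD; unfold inH3 in Ht.
  destruct (cdist_polar (shadow z) c) as (e1 & e2 & He & H1 & H2).
  change (cx (shadow z)) with (px z) in H1; change (cy (shadow z)) with (py z) in H2.
  pose proof (edist_embC_sq z c) as HD.
  set (p := cdist (shadow z) c) in *; set (t := h z) in *.
  assert (Hp : 0 <= p) by apply sqrt_pos.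
  set (S := sqrt (s ^ 2 - t ^ 2)).
  assert (HS2 : S ^ 2 = s ^ 2 - t ^ 2) by (apply pow2_sqrt; nra).
  assert (HS : 0 <= S) by apply sqrt_pos.
  assert (HSp : S <= p) by nra.
  set (w := (cx c + S * e1, cy c + S * e2, t) : pt3).
  assert (Hpxw : px w = cx c + S * e1) by reflexivity.
  assert (Hpyw : py w = cy c + S * e2) by reflexivity.
  assert (Hhw : h w = t) by reflexivity.
  exists w; split; [split | split; [exact Hhw |]].
  - unfold inH3; rewrite Hhw; exact Ht.
  - rewrite (edist_polar w (embC c) S e1 e2) by (auto; rewrite ?Hpxw, ?Hpyw; cbn; ring).
    replace (h (embC c)) with 0 by reflexivity; rewrite Hhw, Rminus_0_r.
    replace (S ^ 2 + t ^ 2) with (s ^ 2) by lra; apply sqrt_pow2; lra.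
  - rewrite (edist_polar z w (p - S) e1 e2) by (auto; rewrite ?Hpxw, ?Hpyw; lra).
    fold t; rewrite Hhw, Rminus_diag, pow_i, Rplus_0_r by lia.
    apply sqrt_pow2; lra.
Qed.

Lemma horizontal_gap_lt (r s t a p q S : R) :
  0 < t -> t < s / 2 -> s < r -> a + s <= r ->
  0 <= q -> q ^ 2 + t ^ 2 = r ^ 2 -> 0 <= S -> S ^ 2 + t ^ 2 = s ^ 2 ->
  p <= q + a -> p - S < 3 * (r - s).
Proof.
  intros Ht Hts Hsr Ha Hq Hq2 HS HS2 Hp.
  (* q > r / 2 and S > s / 2, while (q - S) (q + S) = (r - s) (r + s) *)
  assert (Hq' : r / 2 < q) by nra.
  assert (HS' : s / 2 < S) by nra.
  assert (Hdiff : q - S < 2 * (r - s)) by nra.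
  lra.
Qed.

Theorem lemma5p1 (u v : R * R) (r s : R) (z : pt3) (d : R) :
  0 < r -> 0 < s ->
  (u, r) <> (v, s) ->
  (forall w, edisc v s w -> edisc u r w) ->
  Pi u r z ->
  rho_plane z v s d ->
  r / s < Rmin 2 (1 + sinh d / 8) ->
  h z < s / 2 /\
  (forall w : pt3,
     Pi v s w -> h w = h z ->
     (forall w' : pt3, Pi v s w' -> h w' = h z -> edist z w <= edist z w') ->
     edist z w < 3 * (r - s)).
Proof.
  intros _ Hs _ Hincl Hz Hd Hrs.
  pose proof (edisc_incl_cdist u v r s Hs Hincl) as Huv.
  pose proof (edist_center_bounds u v r s z Hz Huv) as HD.
  destruct Hz as [Hz Hzu].
  pose proof (sinh_rho_plane_le z v s d Hs Hz (proj1 HD) Hd) as Hsinh.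
  destruct (height_lt_half_radius r s (h z) _ _ Hs Hz HD Hsinh Hrs) as [Hsr Ht].
  split; [exact Ht |].
  intros w _ _ Hclosest.
  destruct (radial_point_on_hemisphere z v s Hz ltac:(lra) (proj1 HD))
    as (w' & Hw' & Hhw' & Hzw').
  apply Rle_lt_trans with (edist z w'); [now apply Hclosest |].
  rewrite Hzw'.
  apply (horizontal_gap_lt r s (h z) (cdist u v) _ (cdist (shadow z) u)); auto.
  - apply sqrt_pos.
  - rewrite <- Hzu, edist_embC_sq; ring.
  - apply sqrt_pos.
  - rewrite pow2_sqrt; [ring | unfold inH3 in Hz; nra].
  - apply cdist_triangle.
Qed.
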